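(* Let $A_X$ be an irreducible spherical Artin group with cyclic abelianization (i.e. $X$ not of type $\mathbb{B}_m$, $\mathbb{F}_4$ or $\mathbb{I}_2(2k)$), let $0\ne\chi:A_X\to\mathbb{Z}$ be a character and $\mathbb{F}$ a field. Then $\chi(T_X^{X_v})\ne0$ in $\mathbb{F}[t^{\pm1}]$ for every $v\in X$.
   Context: For a finite set $X$ with labels, $A_X$ is the Artin group and $W_X$ its Coxeter group (add $v^2=1$); spherical means $W_X$ finite, irreducible means the graph on $X$ with edges of label $\ge3$ is connected. For $v\in X$, $X_v=X\setminus\{v\}$, and $W_X^{X_v}$ is the set of elements $w\in W_X$ of minimal word length $l(w)$ in their coset $wW_{X_v}$. For $w\in W_X$, its lift $a_w\in A_X$ is the element $v_1\cdots v_r$ for any reduced expression $w=v_1\cdots v_r$ (well defined). Define $\chi(T_X^{X_v})=\sum_{w\in W_X^{X_v}}(-1)^{l(w)}t^{\chi(a_w)}\in\mathbb{F}[t^{\pm1}]$. *)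

From HB Require Import structures.
From mathcomp Require Import all_boot all_order all_algebra.
From Stdlib Require Import Relation_Operators.
Set Implicit Arguments. Unset Strict Implicit. Unset Printing Implicit Defensive.
Import Order.TTheory GRing.Theory Num.Theory.
Local Open Scope ring_scope.

(* Labels: m : X -> X -> nat, with the convention m s t = 0 encoding the
   label infinity (no relation). *)
Definition coxeter_matrix (X : finType) (m : X -> X -> nat) : Prop :=
  (forall s, m s s = 1%N) /\ (forall s t, m s t = m t s) /\
  (forall s t, s != t -> m s t != 1%N).

Definition alt (X : Type) (s t : X) (n : nat) : seq X :=
  mkseq (fun i => if odd i then t else s) n.

Definition cox_rel (X : finType) (m : X -> X -> nat) (r r' : seq X) : Prop :=
  (exists s, r = [:: s; s] /\ r' = [::]) \/
  (exists s t, m s t != 0%N /\ r = alt s t (m s t) /\ r' = alt t s (m s t)).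

Definition cox_step (X : finType) (m : X -> X -> nat) (u w : seq X) : Prop :=
  exists a b r r', cox_rel m r r' /\ u = a ++ r ++ b /\ w = a ++ r' ++ b.

(* Two words represent the same element of W_X (congruence generated by the
   relations of the presentation; since generators are involutions the monoid
   presentation equals the group presentation). *)
Definition cox_eq (X : finType) (m : X -> X -> nat) : seq X -> seq X -> Prop :=
  clos_refl_sym_trans (seq X) (cox_step m).

Definition spherical (X : finType) (m : X -> X -> nat) : Prop :=
  exists L : seq (seq X), forall w : seq X, exists2 u, u \in L & cox_eq m w u.

Definition irreducible (X : finType) (m : X -> X -> nat) : Prop :=
  forall s t : X, connect (fun a b => (m a b == 0%N) || (3 <= m a b)%N) s t.

Definition ab_relator (X : finType) (m : X -> X -> nat) (s t x : X) : int :=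
  (count_mem x (alt s t (m s t)))%:Z - (count_mem x (alt t s (m s t)))%:Z.

(* The abelianization of A_X, i.e. Z^X modulo the abelianized relators, is
   cyclic. *)
Definition cyclic_abelianization (X : finType) (m : X -> X -> nat) : Prop :=
  exists g : X -> int, forall v : X -> int, exists (k : int) (c : X -> X -> int),
    forall x, v x = k * g x +
      \sum_(s : X) \sum_(t : X | m s t != 0%N) c s t * ab_relator m s t x.

(* A character chi : A_X -> Z, given by its values f on the generators:
   it must respect all Artin relations. *)
Definition artin_character (X : finType) (m : X -> X -> nat) (f : X -> int) : Prop :=
  forall s t, m s t != 0%N ->
    \sum_(x <- alt s t (m s t)) f x = \sum_(x <- alt t s (m s t)) f x.

Definition chi_word (X : finType) (f : X -> int) (w : seq X) : int :=
  \sum_(x <- w) f x.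

Definition reduced (X : finType) (m : X -> X -> nat) (w : seq X) : Prop :=
  forall u, cox_eq m w u -> (size w <= size u)%N.

(* The class of the reduced word w lies in W_X^{X_v}: it has minimal length in
   its coset w W_{X_v}, whose elements are the classes of w ++ u with u a word
   in X_v = X \ {v}. *)
Definition min_coset_rep (X : finType) (m : X -> X -> nat) (v : X) (w : seq X) : Prop :=
  reduced m w /\
  forall u z, all (fun x => x != v) u -> cox_eq m (w ++ u) z -> (size w <= size z)%N.

Definition min_coset_reps (X : finType) (m : X -> X -> nat) (v : X) (ws : seq (seq X)) : Prop :=
  (forall w, w \in ws -> min_coset_rep m v w) /\
  (forall i j, (i < size ws)%N -> (j < size ws)%N ->
      cox_eq m (nth [::] ws i) (nth [::] ws j) -> i = j) /\
  (forall w, min_coset_rep m v w -> exists2 u, u \in ws & cox_eq m w u).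

(* Laurent polynomials in F[t^{+-1}] are represented by their coefficient
   functions int -> F (finitely supported).  chi(T_X^{X_v}) =
   sum_{w} (-1)^{l(w)} t^{chi(a_w)}, with l(w) = size w for reduced w. *)
Definition chi_T (F : fieldType) (X : finType) (f : X -> int) (ws : seq (seq X)) : int -> F :=
  fun k => \sum_(w <- ws | chi_word f w == k) (-1) ^+ size w.

From mathcomp Require Import all_boot all_order all_algebra.
From Stdlib Require Import Relation_Operators.
Set Implicit Arguments. Unset Strict Implicit. Unset Printing Implicit Defensive.
Import GRing.Theory Num.Theory.
Local Open Scope ring_scope.

(* The abelianization of A_X is free abelian on the connected components of
   the graph whose edges are the pairs of generators with an odd label, so a
   cyclic abelianization forces this graph to be connected.  A character is
   constant along odd edges, hence equal to some c <> 0 on every generator,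
   and chi(a_w) = c l(w).  The constant coefficient of chi(T_X^{X_v}) then
   comes from the identity element alone, and equals 1. *)

Lemma alt_cons (T : Type) (s t : T) n : alt s t n.+1 = s :: alt t s n.
Proof.
rewrite /alt /mkseq /= (iotaDl 1 0) -map_comp; congr (_ :: _).
by apply: eq_map => i /=; case: (odd i).
Qed.

Lemma big_alt (T : Type) (V : nmodType) (phi : T -> V) n s t :
  \sum_(x <- alt s t n) phi x = phi s *+ uphalf n + phi t *+ n./2.
Proof.
elim: n s t => [|n IHn] s t; first by rewrite big_nil !mulr0n addr0.
by rewrite alt_cons big_cons IHn /= mulrS [phi t *+ _ + _]addrC addrA.
Qed.

Lemma big_alt_diff (T : Type) (V : zmodType) (phi : T -> V) n s t :
  \sum_(x <- alt s t n) phi x - \sum_(x <- alt t s n) phi x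
  = (phi s - phi t) *+ odd n.
Proof.
rewrite !big_alt uphalf_half !mulrnDr mulrnBl.
set b := phi s *+ n./2; set c := phi t *+ n./2.
by rewrite -!(addrA _ b) -(addrA _ c) (addrC c) (addrC (phi t *+ _)) addrKA.
Qed.

Lemma sum_mul_delta (X : finType) (phi : X -> int) z : \sum_x phi x * (z == x)%:Z = phi z.
Proof.
rewrite (bigD1 z) //= eqxx mulr1 big1 ?addr0 // => x /negbTE.
by rewrite eq_sym => ->; rewrite mulr0.
Qed.

Lemma sum_mul_count (X : finType) (phi : X -> int) (w : seq X) :
  \sum_x phi x * (count_mem x w)%:Z = \sum_(y <- w) phi y.
Proof.
elim: w => [|y w IHw]; first by rewrite big_nil big1 // => x _; rewrite mulr0.
rewrite big_cons -IHw -(sum_mul_delta phi y) -big_split /=.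
by apply: eq_bigr => x _; rewrite PoszD mulrDr.
Qed.

Section OddGraph.

Variables (X : finType) (m : X -> X -> nat).

Definition odd_edge : rel X := fun s t => odd (m s t).

Lemma odd_edge_sym : (forall s t, m s t = m t s) -> connect_sym odd_edge.
Proof. by move=> msym; apply: sym_connect_sym => s t; rewrite /odd_edge msym. Qed.

Lemma artin_character_odd_edge (f : X -> int) s t :
  artin_character m f -> odd_edge s t -> f s = f t.
Proof.
rewrite /odd_edge => chi_f odd_st.
have m_st_neq0 : m s t != 0%N by move: odd_st; case: (m s t).
move/eqP: (chi_f s t m_st_neq0); rewrite -subr_eq0 big_alt_diff odd_st mulr1n.
by rewrite subr_eq0 => /eqP.
Qed.

Lemma sum_mul_ab_relator (phi : X -> int) s t :
  \sum_x phi x * ab_relator m s t x = (phi s - phi t) *+ odd (m s t).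
Proof.
rewrite -big_alt_diff -!(sum_mul_count phi) -sumrB.
by apply: eq_bigr => x _; rewrite mulrBr.
Qed.

Lemma cyclic_abelianization_eval : cyclic_abelianization m ->
  exists g : X -> int, forall z, exists k : int, forall phi : X -> int,
    {homo phi : s t / odd_edge s t >-> s = t} -> phi z = k * \sum_y phi y * g y.
Proof.
move=> [g cyc]; exists g => z; have [k [c delta_z]] := cyc (fun y => (z == y)%:Z).
exists k => phi phi_odd.
have kill_relators s t : \sum_x phi x * ab_relator m s t x = 0.
  rewrite sum_mul_ab_relator; case odd_st: (odd (m s t)); last by rewrite mulr0n.
  by rewrite (phi_odd s t odd_st) subrr.
have kill_combination :
    \sum_y phi y * \sum_s \sum_(t | m s t != 0%N) c s t * ab_relator m s t y = 0.
  under eq_bigr => y _ do rewrite big_distrr.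
  rewrite /= exchange_big big1 // => s _.
  under eq_bigr => y _ do rewrite big_distrr.
  rewrite /= exchange_big big1 // => t _.
  by under eq_bigr => y _ do rewrite mulrCA; rewrite -big_distrr /= kill_relators mulr0.
rewrite -(sum_mul_delta phi z).
under eq_bigr => y _ do rewrite delta_z mulrDr mulrCA.
by rewrite big_split /= kill_combination addr0 -big_distrr.
Qed.

(* Test the decomposition of the basis vector e_y against the indicators of
   the components of x and of y: if these components differ, the first test
   forces its coefficient to be 0 and the second forces it to be nonzero. *)
Lemma cyclic_abelianization_odd_connected :
  (forall s t, m s t = m t s) -> cyclic_abelianization m ->
  forall x y, connect odd_edge x y.
Proof.
move=> msym /cyclic_abelianization_eval [g eval_g] x y.
pose comp a b : int := connect odd_edge a b.
have comp_odd a : {homo comp a : s t / odd_edge s t >-> s = t}.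
  by move=> s t odd_st; rewrite /comp (same_connect_r (odd_edge_sym msym) (connect1 odd_st)).
apply/negPn/negP => not_xy.
have [kx eval_x] := eval_g x; have [ky eval_y] := eval_g y.
have comp_xx a : comp a a = 1 by rewrite /comp connect0.
have Px_neq0 : \sum_u comp x u * g u != 0.
  by apply: contra_eq_neq (eval_x _ (comp_odd x)) => ->; rewrite comp_xx mulr0.
have ky0 : ky = 0.
  apply/eqP; move: (eval_y _ (comp_odd x)); rewrite /comp (negbTE not_xy) /=.
  by move/esym/eqP; rewrite mulf_eq0 (negbTE Px_neq0) orbF.
by move: (eval_y _ (comp_odd y)); rewrite comp_xx ky0 mul0r.
Qed.

Lemma artin_character_connect (f : X -> int) x y :
  artin_character m f -> connect odd_edge x y -> f x = f y.
Proof.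
move=> chi_f x_y; have f_closed : closed odd_edge [pred u | f u == f x].
  by move=> s t /(artin_character_odd_edge chi_f) f_st; rewrite !unfold_in /= f_st.
by move: (closed_connect f_closed x_y); rewrite !inE eqxx => /esym/eqP ->.
Qed.

End OddGraph.

Lemma chi_word_const (X : finType) (f : X -> int) c w :
  (forall x, f x = c) -> chi_word f w = c *+ size w.
Proof.
move=> f_const; rewrite /chi_word; elim: w => [|x w IHw]; first by rewrite big_nil.
by rewrite big_cons IHw f_const mulrS.
Qed.

Section CosetRepresentatives.

Variables (X : finType) (m : X -> X -> nat) (v : X) (ws : seq (seq X)).
Hypothesis reps : min_coset_reps m v ws.

Lemma min_coset_reps_uniq : uniq ws.
Proof.
have [_ [reps_inj _]] := reps; apply/(uniqP [::]) => i j ws_i ws_j eq_ij.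
by apply: reps_inj => //; rewrite eq_ij; apply: rst_refl.
Qed.

Lemma min_coset_reps_nil : [::] \in ws.
Proof.
have [reps_min [_ reps_all]] := reps.
have [|u u_ws nil_u] := reps_all [::]; first by split=> // u _.
have [u_reduced _] := reps_min u u_ws.
by have := u_reduced [::] (rst_sym _ _ _ _ nil_u); rewrite leqn0 => /nilP u_nil; rewrite -u_nil.
Qed.

End CosetRepresentatives.

Lemma chi_T_coef0 (F : fieldType) (X : finType) (f : X -> int) (ws : seq (seq X)) :
  uniq ws -> [::] \in ws -> (forall w, chi_word f w = 0 -> w = [::]) ->
  chi_T F f ws 0 = 1.
Proof.
move=> ws_uniq ws_nil chi_eq0.
have chi_eq0_nil w : (chi_word f w == 0) = (w == [::]).
  by apply/eqP/eqP => [/chi_eq0 // | ->]; rewrite /chi_word big_nil.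
rewrite /chi_T; under eq_bigl => w do rewrite chi_eq0_nil.
by rewrite -big_filter filter_pred1_uniq // big_seq1 expr0.
Qed.

Theorem lemma6p3 (X : finType) (m : X -> X -> nat) (F : fieldType) (f : X -> int)
  (v : X) (ws : seq (seq X)) :
  coxeter_matrix m -> spherical m -> irreducible m -> cyclic_abelianization m ->
  artin_character m f -> (exists x, f x != 0) ->
  min_coset_reps m v ws ->
  chi_T F f ws <> (fun _ => 0).
Proof.
move=> [_ [msym _]] _ _ /(cyclic_abelianization_odd_connected msym) connected chi_f.
move=> [x fx_neq0] reps /(congr1 (fun P => P 0)) /eqP.
have f_const y : f y = f x by rewrite (artin_character_connect chi_f (connected x y)).
rewrite chi_T_coef0 ?oner_eq0 ?(min_coset_reps_uniq reps) ?(min_coset_reps_nil reps) // => w.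
by rewrite (chi_word_const _ f_const) => /eqP; rewrite mulrn_eq0 (negbTE fx_neq0) orbF => /nilP.
Qed.
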